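(* Let $G$ be a $2$-tuple regular finite group and let $a,b,a',b'\in G$ be such that $a\mapsto a',b\mapsto b'$ defines an isomorphism $\langle a,b\rangle\to\langle a',b'\rangle$. If $b=gag^{-1}$ for some $g\in G$, then there exists $g'\in G$ with $\operatorname{ord}(g')=\operatorname{ord}(g)$ and $b'=g'a'g'^{-1}$.
   Context: A finite group $G$ is $2$-tuple regular if for all pairs $(g_1,g_2),(h_1,h_2)\in G^2$ (entries may coincide) for which $g_1\mapsto h_1,g_2\mapsto h_2$ defines an isomorphism $\langle g_1,g_2\rangle\to\langle h_1,h_2\rangle$, there is a bijection $\Psi\colon G\to G$ such that for every $g\in G$ the assignment $g_1\mapsto h_1,g_2\mapsto h_2,g\mapsto\Psi(g)$ defines an isomorphism $\langle g_1,g_2,g\rangle\to\langle h_1,h_2,\Psi(g)\rangle$. *)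

From mathcomp Require Import all_boot all_fingroup.
Set Implicit Arguments. Unset Strict Implicit. Unset Printing Implicit Defensive.
Local Open Scope group_scope.

Definition gen_iso (gT : finGroupType) (xs ys : seq gT) : Prop :=
  exists f : {morphism <<[set:: xs]>> >-> gT},
    isom <<[set:: xs]>> <<[set:: ys]>> f /\ map f xs = ys.

Definition two_tuple_regular (gT : finGroupType) : Prop :=
  forall g1 g2 h1 h2 : gT,
    gen_iso [:: g1; g2] [:: h1; h2] ->
    exists Psi : gT -> gT, bijective Psi /\
      forall g : gT, gen_iso [:: g1; g2; g] [:: h1; h2; Psi g].

From mathcomp Require Import all_boot all_fingroup.
Set Implicit Arguments. Unset Strict Implicit. Unset Printing Implicit Defensive.
Local Open Scope group_scope.

(* Extend the isomorphism a |-> a', b |-> b' by the conjugating element g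
   using 2-tuple regularity; an isomorphism preserves element orders and
   carries the relation b = g a g^-1 to the corresponding one for the images. *)

Lemma mem_gen_seq (gT : finGroupType) (xs : seq gT) (x : gT) :
  x \in xs -> x \in <<[set:: xs]>>.
Proof. by move=> xs_x; apply: mem_gen; rewrite inE. Qed.

Lemma gen_iso_conjg (gT : finGroupType) (a b g a' b' g' : gT) :
  gen_iso [:: a; b; g] [:: a'; b'; g'] -> b = g * a * g^-1 ->
  #[g'] = #[g] /\ b' = g' * a' * g'^-1.
Proof.
move=> [f [isof [<- <- <-]]] def_b.
have Ga : a \in <<[set:: [:: a; b; g]]>> by apply: mem_gen_seq; rewrite !inE eqxx.
have Gg : g \in <<[set:: [:: a; b; g]]>> by apply: mem_gen_seq; rewrite !inE eqxx !orbT.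
split; first exact: (order_injm (isom_inj isof) Gg).
(* [rewrite def_b] is ill-typed: the domain of [f] mentions [b]. *)
by rewrite (congr1 f def_b) !morphM ?morphV ?groupM ?groupV.
Qed.

Theorem lemma3p7 (gT : finGroupType) (hreg : two_tuple_regular gT)
  (a b a' b' : gT) (hiso : gen_iso [:: a; b] [:: a'; b'])
  (g : gT) (hb : b = g * a * g^-1) :
  exists g' : gT, #[g'] = #[g] /\ b' = g' * a' * g'^-1.
Proof.
have [Psi [_ extend_iso]] := hreg _ _ _ _ hiso.
by exists (Psi g); exact: gen_iso_conjg (extend_iso g) hb.
Qed.
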